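(* For $a\in\mathbb{Q}$ let $\mathcal{R}_a$ be the rectangle with vertices $P_1=(0,0)$, $P_2=(0,1)$, $P_3=(a,0)$, $P_4=(a,1)$. Then the set of $a\in\mathbb{Q}$ for which there are infinitely many points $(x,y)\in\mathbb{Q}^2$ whose Euclidean distances to each of $P_1,P_2,P_3,P_4$ are rational numbers is dense in $\mathbb{R}$.
   Context: No further context is needed. *)

From Stdlib Require Import Reals QArith Qreals List.
Open Scope R_scope.

Definition is_rational (r : R) : Prop := exists q : Q, Q2R q = r.

Definition eucl_dist (p q : R * R) : R :=
  sqrt ((fst p - fst q) ^ 2 + (snd p - snd q) ^ 2).

Definition P1 (a : Q) : R * R := (0, 0).
Definition P2 (a : Q) : R * R := (0, 1).
Definition P3 (a : Q) : R * R := (Q2R a, 0).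
Definition P4 (a : Q) : R * R := (Q2R a, 1).

Definition good_point (a : Q) (p : R * R) : Prop :=
  is_rational (fst p) /\ is_rational (snd p) /\
  is_rational (eucl_dist p (P1 a)) /\ is_rational (eucl_dist p (P2 a)) /\
  is_rational (eucl_dist p (P3 a)) /\ is_rational (eucl_dist p (P4 a)).

Definition infinite_set (S : R * R -> Prop) : Prop :=
  forall l : list (R * R), exists p, S p /\ ~ In p l.

Definition good_a (a : Q) : Prop := infinite_set (good_point a).

(* Take the points on the side y = 0: the four distances from (x, 0) are rational iff
   x^2 + 1 and (a - x)^2 + 1 are rational squares.  Writing x and a - x in the form
   (m - 1/m)/2 turns this into rational points of an elliptic curve attached to a.  For
   a = s + 1/(3 - 4s) with s of odd denominator this curve has an explicit point whose
   coordinates are 2-adic units; its multiples by 2^k give abscissae of 2-adic valuation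
   exactly -(k+2), hence infinitely many good points.  Since s |-> s + 1/(3 - 4s) is an
   increasing bijection from (-oo, 3/4) onto R and rationals with odd denominator are
   dense, these a are dense. *)

From Stdlib Require Import Reals QArith Qreals List FinFun Lra Lia ZArith Btauto Classical.
Open Scope R_scope.

Lemma rational_IZR (z : Z) : is_rational (IZR z).
Proof. exists (inject_Z z). unfold Q2R, inject_Z; simpl. field. Qed.

Lemma rational_add x y : is_rational x -> is_rational y -> is_rational (x + y).
Proof. intros [p <-] [q <-]. exists (p + q)%Q. apply Q2R_plus. Qed.

Lemma rational_mul x y : is_rational x -> is_rational y -> is_rational (x * y).
Proof. intros [p <-] [q <-]. exists (p * q)%Q. apply Q2R_mult. Qed.

Lemma rational_opp x : is_rational x -> is_rational (- x).
Proof. intros [p <-]. exists (- p)%Q. apply Q2R_opp. Qed.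

Lemma rational_inv x : is_rational x -> is_rational (/ x).
Proof.
  intros [p <-]. destruct (Req_dec (Q2R p) 0) as [E | NZ].
  - rewrite E, Rinv_0. apply (rational_IZR 0).
  - exists (/ p)%Q. apply Q2R_inv. intro E.
    apply NZ. rewrite (Qeq_eqR _ _ E). unfold Q2R; simpl. ring.
Qed.

Lemma rational_sqrt_sqr x e : is_rational x -> e = x ^ 2 -> is_rational (sqrt e).
Proof.
  intros Hx ->. rewrite <- Rsqr_pow2, sqrt_Rsqr_abs. unfold Rabs.
  destruct Rcase_abs; [apply rational_opp |]; exact Hx.
Qed.

Ltac rational :=
  repeat first
    [ assumption | apply rational_IZR | apply rational_add | apply rational_mul
    | apply rational_opp | apply rational_inv | unfold Rminus | unfold Rdiv ].

(* [odd_den b r]: r = p/q with q odd and p of parity b.  These are the elements of the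
   localisation Z_(2); [b = true] singles out its units, [b = false] its ideal 2 Z_(2). *)
Definition odd_den (b : bool) (r : R) : Prop :=
  exists p q : Z, Z.odd p = b /\ Z.odd q = true /\ r = IZR p / IZR q.

Lemma IZR_odd_neq0 q : Z.odd q = true -> IZR q <> 0.
Proof. intros Hq. apply not_0_IZR. intros ->. discriminate. Qed.

Lemma odd_den_IZR z : odd_den (Z.odd z) (IZR z).
Proof. exists z, 1%Z. repeat split. unfold Rdiv. rewrite Rinv_1. ring. Qed.

Lemma odd_den_add b c x y : odd_den b x -> odd_den c y -> odd_den (xorb b c) (x + y).
Proof.
  intros (p & q & <- & Hq & ->) (p' & q' & <- & Hq' & ->).
  exists (p * q' + p' * q)%Z, (q * q')%Z.
  rewrite Z.odd_add, !Z.odd_mul, Hq, Hq', !andb_true_r. repeat split.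
  rewrite plus_IZR, !mult_IZR. field. split; apply IZR_odd_neq0; assumption.
Qed.

Lemma odd_den_mul b c x y : odd_den b x -> odd_den c y -> odd_den (b && c) (x * y).
Proof.
  intros (p & q & <- & Hq & ->) (p' & q' & <- & Hq' & ->).
  exists (p * p')%Z, (q * q')%Z.
  rewrite !Z.odd_mul, Hq, Hq'. repeat split.
  rewrite !mult_IZR. field. split; apply IZR_odd_neq0; assumption.
Qed.

Lemma odd_den_opp b x : odd_den b x -> odd_den b (- x).
Proof.
  intros (p & q & <- & Hq & ->). exists (- p)%Z, q.
  rewrite Z.odd_opp, opp_IZR. repeat split; auto. field. apply IZR_odd_neq0, Hq.
Qed.

Lemma odd_den_unit_neq0 x : odd_den true x -> x <> 0.
Proof.
  intros (p & q & Hp & Hq & ->). apply Rmult_integral_contrapositive_currified.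
  - apply IZR_odd_neq0, Hp.
  - apply Rinv_neq_0_compat, IZR_odd_neq0, Hq.
Qed.

Lemma odd_den_inv x : odd_den true x -> odd_den true (/ x).
Proof.
  intros (p & q & Hp & Hq & ->). exists q, p. repeat split; auto.
  field. split; apply IZR_odd_neq0; assumption.
Qed.

Lemma odd_den_cast b c x : odd_den b x -> b = c -> odd_den c x.
Proof. intros H <-. exact H. Qed.

Lemma odd_den_pow b x n :
  odd_den b x -> odd_den (match n with O => true | S _ => b end) (x ^ n).
Proof.
  intros Hx. induction n as [| n IH]; simpl.
  - apply (odd_den_IZR 1).
  - eapply odd_den_cast; [apply odd_den_mul; eassumption | destruct n, b; reflexivity].
Qed.

Lemma odd_den_rational b x : odd_den b x -> is_rational x.
Proof.
  intros (p & q & _ & _ & ->). unfold Rdiv. apply rational_mul.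
  - apply rational_IZR.
  - apply rational_inv, rational_IZR.
Qed.

(* Proves [odd_den b e] for a ring expression [e] built from hypotheses, integer
   constants and inverses of units, by computing the parity of [e]. *)
Ltac odd_den_term :=
  lazymatch goal with
  | |- odd_den _ (IZR _) => apply odd_den_IZR
  | |- odd_den _ (_ + _) => apply odd_den_add; odd_den_term
  | |- odd_den _ (_ - _) => apply odd_den_add; [odd_den_term | apply odd_den_opp; odd_den_term]
  | |- odd_den _ (- _) => apply odd_den_opp; odd_den_term
  | |- odd_den _ (_ * _) => apply odd_den_mul; odd_den_term
  | |- odd_den _ (_ / _) => apply odd_den_mul; [odd_den_term | odd_den_term]
  | |- odd_den _ (/ _) => apply odd_den_inv; solve_odd_den
  | |- odd_den _ (_ ^ _) => apply odd_den_pow; odd_den_term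
  | |- _ => eassumption
  end
with solve_odd_den :=
  eapply odd_den_cast; [odd_den_term | cbn; btauto].

Definition half_diff (m : R) : R := (m - / m) / 2.

Lemma half_diff_sqr_add1 m : m <> 0 -> half_diff m ^ 2 + 1 = ((m + / m) / 2) ^ 2.
Proof. intros. unfold half_diff. field. assumption. Qed.

Lemma good_point_half_diff (a : Q) m m' :
  is_rational m -> is_rational m' -> m <> 0 -> m' <> 0 ->
  half_diff m + half_diff m' = Q2R a -> good_point a (half_diff m, 0).
Proof.
  intros Hm Hm' Hm0 Hm'0 Hsum.
  assert (Hx : is_rational (half_diff m)) by (unfold half_diff; rational).
  assert (Hx' : is_rational (half_diff m')) by (unfold half_diff; rational).
  unfold good_point, eucl_dist, P1, P2, P3, P4; simpl fst; simpl snd.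
  repeat split.
  - exact Hx.
  - apply (rational_IZR 0).
  - apply rational_sqrt_sqr with (half_diff m); [exact Hx | ring].
  - apply rational_sqrt_sqr with ((m + / m) / 2); [rational |].
    rewrite <- half_diff_sqr_add1 by assumption. ring.
  - apply rational_sqrt_sqr with (half_diff m'); [exact Hx' | rewrite <- Hsum; ring].
  - apply rational_sqrt_sqr with ((m' + / m') / 2); [rational |].
    rewrite <- half_diff_sqr_add1, <- Hsum by assumption. ring.
Qed.

(* [(u, w, t)] are weighted homogeneous coordinates of the point (u/t^2, w/t^3) of the
   elliptic curve W^2 = U^3 + (a^2 + 2) U^2 + U. *)
Definition on_curve (a u w t : R) : Prop :=
  w ^ 2 = u ^ 3 + (a ^ 2 + 2) * u ^ 2 * t ^ 2 + u * t ^ 4.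

(* The two roots of X^2 + 2aut/(t^2+u) X - u, whose discriminant is (2w/(t^2+u))^2
   precisely on the curve. *)
Definition curve_root (a u w t : R) : R := (w - a * u * t) / (t ^ 2 + u).
Definition curve_root' (a u w t : R) : R := - (w + a * u * t) / (t ^ 2 + u).

Lemma half_diff_curve_roots a u w t :
  t <> 0 -> t ^ 2 + u <> 0 -> curve_root a u w t <> 0 -> curve_root' a u w t <> 0 ->
  on_curve a u w t ->
  half_diff (t / curve_root a u w t) + half_diff (t / curve_root' a u w t) = a.
Proof.
  intros Ht Hn Hv Hv' Hc.
  assert (Hprod : curve_root a u w t * curve_root' a u w t = - u).
  { unfold curve_root, curve_root'.
    replace ((w - a * u * t) / (t ^ 2 + u) * (- (w + a * u * t) / (t ^ 2 + u)))
      with (- (w ^ 2 - a ^ 2 * u ^ 2 * t ^ 2) / (t ^ 2 + u) ^ 2) by (field; exact Hn).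
    rewrite Hc. field. exact Hn. }
  assert (Hsum : curve_root a u w t + curve_root' a u w t = - 2 * a * u * t / (t ^ 2 + u)).
  { unfold curve_root, curve_root'. field. exact Hn. }
  set (v := curve_root a u w t) in *. set (v' := curve_root' a u w t) in *.
  transitivity ((v + v') * (t ^ 2 - v * v') / (2 * t * (v * v'))).
  - unfold half_diff. field. auto.
  - assert (Hu : u <> 0).
    { rewrite <- (Ropp_involutive u), <- Hprod.
      apply Ropp_neq_0_compat, Rmult_integral_contrapositive_currified; assumption. }
    rewrite Hprod, Hsum. field. auto.
Qed.

(* The doubling map of the curve, written with [t] replaced by [2 t] so that the new
   [u] and [w] stay 2-adic units. *)
Definition double_u (u w t : R) : R := (u ^ 2 - t ^ 4) ^ 2 / w ^ 2.
Definition double_w (a u w t : R) : R :=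
  ((3 * u ^ 2 + 2 * (a ^ 2 + 2) * u * t ^ 2 + t ^ 4) * (4 * u - double_u u w t) - 8 * w ^ 2) / w.

Lemma on_curve_double a u w t :
  w <> 0 -> on_curve a u w t -> on_curve a (double_u u w t) (double_w a u w t) (2 * t).
Proof.
  unfold on_curve, double_w, double_u. intros Hw Hc.
  assert (Hw2 : w ^ 2 <> 0) by (apply pow_nonzero; exact Hw).
  match goal with
  | |- (?N / w) ^ 2 = _ => replace ((N / w) ^ 2) with (N ^ 2 / w ^ 2) by (field; exact Hw)
  end.
  rewrite Hc in *. field. exact Hw2.
Qed.

Lemma odd_den_double b a u w t :
  odd_den b a -> odd_den true u -> odd_den true w -> odd_den false t ->
  odd_den true (double_u u w t) /\ odd_den true (double_w a u w t).
Proof. intros. unfold double_w, double_u. split; solve_odd_den. Qed.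

Definition curve_double (a : R) (P : R * R * R) : R * R * R :=
  let '(u, w, t) := P in (double_u u w t, double_w a u w t, 2 * t).

Lemma iter_curve_double b a u0 w0 :
  odd_den b a -> odd_den true u0 -> odd_den true w0 -> on_curve a u0 w0 2 ->
  forall k, exists u w, Nat.iter k (curve_double a) (u0, w0, 2) = (u, w, 2 ^ S k) /\
    odd_den true u /\ odd_den true w /\ on_curve a u w (2 ^ S k).
Proof.
  intros Ha Hu0 Hw0 Hc0 k. induction k as [| k (u & w & Hk & Hu & Hw & Hc)].
  - exists u0, w0. rewrite pow_1. auto.
  - exists (double_u u w (2 ^ S k)), (double_w a u w (2 ^ S k)).
    assert (Ht : odd_den false (2 ^ S k)) by solve_odd_den.
    destruct (odd_den_double b a u w (2 ^ S k)) as [Hu' Hw']; auto.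
    simpl Nat.iter. rewrite Hk. repeat split; auto.
    apply on_curve_double; [apply odd_den_unit_neq0 |]; assumption.
Qed.

Definition curve_point (a : R) (P : R * R * R) : R * R :=
  let '(u, w, t) := P in (half_diff (t / curve_root a u w t), 0).

Lemma good_point_curve_point b (a : Q) u w t :
  odd_den b (Q2R a) -> odd_den true u -> odd_den true w -> odd_den false t -> t <> 0 ->
  on_curve (Q2R a) u w t -> good_point a (curve_point (Q2R a) (u, w, t)).
Proof.
  intros Ha Hu Hw Ht Ht0 Hc.
  assert (Hv : odd_den true (curve_root (Q2R a) u w t)) by (unfold curve_root; solve_odd_den).
  assert (Hv' : odd_den true (curve_root' (Q2R a) u w t)) by (unfold curve_root'; solve_odd_den).
  assert (Hn : odd_den true (t ^ 2 + u)) by solve_odd_den.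
  apply odd_den_unit_neq0 in Hn.
  pose proof (odd_den_unit_neq0 _ Hv). pose proof (odd_den_unit_neq0 _ Hv').
  apply good_point_half_diff with (t / curve_root' (Q2R a) u w t).
  - apply odd_den_rational with false. solve_odd_den.
  - apply odd_den_rational with false. solve_odd_den.
  - apply Rmult_integral_contrapositive_currified; [| apply Rinv_neq_0_compat]; assumption.
  - apply Rmult_integral_contrapositive_currified; [| apply Rinv_neq_0_compat]; assumption.
  - apply half_diff_curve_roots; assumption.
Qed.

Lemma odd_den_parity_unique b c x : odd_den b x -> odd_den c x -> b = c.
Proof.
  intros (p & q & <- & Hq & ->) (p' & q' & <- & Hq' & E).
  assert (Hcross : (p * q' = p' * q)%Z).
  { apply eq_IZR. rewrite !mult_IZR.
    pose proof (IZR_odd_neq0 _ Hq). pose proof (IZR_odd_neq0 _ Hq').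
    apply (Rmult_eq_reg_r (/ (IZR q * IZR q'))).
    2: apply Rinv_neq_0_compat, Rmult_integral_contrapositive_currified; assumption.
    replace (IZR p * IZR q' * / (IZR q * IZR q')) with (IZR p / IZR q) by (field; auto).
    rewrite E. field. auto. }
  apply (f_equal Z.odd) in Hcross. rewrite !Z.odd_mul, Hq, Hq', !andb_true_r in Hcross.
  exact Hcross.
Qed.

Lemma unit_div_pow2_inj e e' n m :
  odd_den true e -> odd_den true e' -> e / 2 ^ n = e' / 2 ^ m -> n = m.
Proof.
  assert (Hshift : forall e e' n d, odd_den true e -> odd_den true e' ->
                     e / 2 ^ n <> e' / 2 ^ (n + S d)).
  { intros x x' k d Hx Hx' E.
    assert (Hx'eq : x' = x * 2 ^ S d).
    { rewrite pow_add in E.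
      assert (2 ^ k <> 0) by (apply pow_nonzero; lra).
      assert (2 ^ S d <> 0) by (apply pow_nonzero; lra).
      replace x' with (x' / (2 ^ k * 2 ^ S d) * (2 ^ k * 2 ^ S d)) by (field; auto).
      rewrite <- E. field. auto. }
    assert (Heven : odd_den false x') by (rewrite Hx'eq; solve_odd_den).
    discriminate (odd_den_parity_unique _ _ _ Hx' Heven). }
  intros He He' E. destruct (lt_eq_lt_dec n m) as [[Hlt | Heq] | Hgt].
  - exfalso. apply (Hshift e e' n (m - S n)%nat); auto.
    replace (n + S (m - S n))%nat with m by lia. exact E.
  - exact Heq.
  - exfalso. apply (Hshift e' e m (n - S m)%nat); auto.
    replace (m + S (n - S m))%nat with n by lia. auto.
Qed.

Lemma curve_point_pow2 b a u w k :
  odd_den b a -> odd_den true u -> odd_den true w ->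
  exists e, odd_den true e /\ fst (curve_point a (u, w, 2 ^ S k)) = e / 2 ^ S (S k).
Proof.
  intros Ha Hu Hw. set (t := 2 ^ S k).
  assert (Ht : odd_den false t) by (unfold t; solve_odd_den).
  assert (Hv : odd_den true (curve_root a u w t)) by (unfold curve_root; solve_odd_den).
  exists ((t ^ 2 - curve_root a u w t ^ 2) / curve_root a u w t). split.
  - solve_odd_den.
  - pose proof (odd_den_unit_neq0 _ Hv).
    assert (t <> 0) by (apply pow_nonzero; lra).
    replace (2 ^ S (S k)) with (2 * t) by reflexivity.
    simpl. unfold half_diff. field. auto.
Qed.

Lemma infinite_set_injective (P : R * R -> Prop) (f : nat -> R * R) :
  (forall k, P (f k)) -> Injective f -> infinite_set P.
Proof.
  intros HS Hf l. apply NNPP. intros Hnone.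
  assert (Hincl : incl (map f (seq 0 (S (length l)))) l).
  { intros p Hp. apply in_map_iff in Hp as (k & <- & _).
    apply NNPP. intros Hk. apply Hnone. exists (f k). auto. }
  apply NoDup_incl_length in Hincl; [| apply Injective_map_NoDup, seq_NoDup; exact Hf].
  rewrite length_map, length_seq in Hincl. lia.
Qed.

Lemma good_a_of_curve_point b (a : Q) u0 w0 :
  odd_den b (Q2R a) -> odd_den true u0 -> odd_den true w0 -> on_curve (Q2R a) u0 w0 2 ->
  good_a a.
Proof.
  intros Ha Hu0 Hw0 Hc0.
  pose proof (iter_curve_double b _ u0 w0 Ha Hu0 Hw0 Hc0) as Hiter.
  apply (infinite_set_injective _
           (fun k => curve_point (Q2R a) (Nat.iter k (curve_double (Q2R a)) (u0, w0, 2)))).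
  - intros k. destruct (Hiter k) as (u & w & -> & Hu & Hw & Hc).
    apply good_point_curve_point with b; auto.
    + solve_odd_den.
    + apply pow_nonzero. lra.
  - intros k j E.
    destruct (Hiter k) as (u & w & Ek & Hu & Hw & _).
    destruct (Hiter j) as (u' & w' & Ej & Hu' & Hw' & _).
    destruct (curve_point_pow2 b _ u w k Ha Hu Hw) as (e & He & Hx).
    destruct (curve_point_pow2 b _ u' w' j Ha Hu' Hw') as (e' & He' & Hx').
    rewrite Ek, Ej in E. apply (f_equal fst) in E. rewrite Hx, Hx' in E.
    apply unit_div_pow2_inj in E; auto. lia.
Qed.

(* For [s] in Z_(2) the curve attached to [width_family s] has the point
   (u, w, t) = (4s - 3, 1 + 2s - 8s^2, 2) with 2-adic unit coordinates. *)
Definition width_family (s : R) : R := s + / (3 - 4 * s).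

Lemma on_curve_width_family s :
  3 - 4 * s <> 0 -> on_curve (width_family s) (4 * s - 3) (1 + 2 * s - 8 * s ^ 2) 2.
Proof. intros. unfold on_curve, width_family. field. assumption. Qed.

Lemma width_family_lt s s' : s < s' -> s' < 3 / 4 -> width_family s < width_family s'.
Proof.
  intros. unfold width_family.
  assert (/ (3 - 4 * s) < / (3 - 4 * s')) by (apply Rinv_lt_contravar; nra).
  lra.
Qed.

Definition width_family_inv (y : R) : R := (3 + 4 * y - sqrt ((4 * y - 3) ^ 2 + 16)) / 8.

Lemma width_family_inv_spec y :
  width_family_inv y < 3 / 4 /\ width_family (width_family_inv y) = y.
Proof.
  unfold width_family_inv, width_family.
  set (r := sqrt ((4 * y - 3) ^ 2 + 16)).
  assert (Hr : r * r = (4 * y - 3) ^ 2 + 16) by (apply sqrt_sqrt; nra).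
  assert (Hr0 : 0 <= r) by apply sqrt_pos.
  assert (Hpos : 0 < 3 - 4 * y + r) by nra.
  split; [nra |].
  replace (3 - 4 * ((3 + 4 * y - r) / 8)) with ((3 - 4 * y + r) / 2) by field.
  apply Rminus_diag_uniq.
  replace ((3 + 4 * y - r) / 8 + / ((3 - 4 * y + r) / 2) - y)
    with ((16 - (r * r - (4 * y - 3) ^ 2)) / (8 * (3 - 4 * y + r))) by (field; lra).
  rewrite Hr. field. lra.
Qed.

Lemma width_family_inv_lt y y' : y < y' -> width_family_inv y < width_family_inv y'.
Proof.
  intros Hy. destruct (width_family_inv_spec y) as [Hs3 Hs].
  destruct (width_family_inv_spec y') as [_ Hs'].
  destruct (Rtotal_order (width_family_inv y) (width_family_inv y')) as [Hlt | [Heq | Hgt]].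
  - exact Hlt.
  - rewrite Heq, Hs' in Hs. lra.
  - pose proof (width_family_lt _ _ Hgt Hs3). lra.
Qed.

Lemma odd_den_dense s1 s2 : s1 < s2 -> exists b s, odd_den b s /\ s1 < s < s2.
Proof.
  intros H.
  destruct (archimed (/ (s2 - s1))) as [A1 _].
  assert (Hp : 0 < / (s2 - s1)) by (apply Rinv_0_lt_compat; lra).
  set (M := (2 * up (/ (s2 - s1)) + 1)%Z).
  assert (HM : IZR M = 2 * IZR (up (/ (s2 - s1))) + 1)
    by (unfold M; rewrite plus_IZR, mult_IZR; reflexivity).
  assert (HM1 : IZR M * (s2 - s1) > 1).
  { assert (Hgt : IZR M > / (s2 - s1)) by lra.
    apply Rmult_gt_compat_r with (r := s2 - s1) in Hgt; [| lra].
    rewrite Rinv_l in Hgt; lra. }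
  assert (HM0 : IZR M > 0) by lra.
  destruct (archimed (IZR M * s1)) as [B1 B2].
  exists (Z.odd (up (IZR M * s1))), (IZR (up (IZR M * s1)) / IZR M). split.
  - exists (up (IZR M * s1)), M. repeat split.
    unfold M. rewrite Z.odd_add, Z.odd_mul. reflexivity.
  - split; apply Rmult_lt_reg_r with (IZR M); auto; unfold Rdiv;
      rewrite Rmult_assoc, Rinv_l; lra.
Qed.

Theorem theorem2p1 :
  forall u v : R, u < v -> exists a : Q, good_a a /\ u < Q2R a < v.
Proof.
  intros u v Huv.
  destruct (width_family_inv_spec u) as [_ Hu].
  destruct (width_family_inv_spec v) as [Hv3 Hv].
  destruct (odd_den_dense _ _ (width_family_inv_lt _ _ Huv)) as (b & s & Hs & Hlo & Hhi).
  assert (Hc : odd_den true (3 - 4 * s)) by solve_odd_den.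
  assert (Ha : odd_den (xorb b true) (width_family s)) by (unfold width_family; solve_odd_den).
  destruct (odd_den_rational _ _ Ha) as [a Ea].
  exists a. split.
  - apply (good_a_of_curve_point (xorb b true) a (4 * s - 3) (1 + 2 * s - 8 * s ^ 2)).
    + rewrite Ea. exact Ha.
    + solve_odd_den.
    + solve_odd_den.
    + rewrite Ea. apply on_curve_width_family, odd_den_unit_neq0, Hc.
  - rewrite Ea, <- Hu, <- Hv. split; apply width_family_lt; lra.
Qed.
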